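(* Let $X$ be a real random variable such that $\mathbb{E}(|X|^{2p})\le2^{p+1}p!$ for every integer $p\ge1$. Then for all $\lambda\in\mathbb{R}$ the series below converges and $$1+\sum_{k=2}^\infty\frac{\lambda^k}{k!}\mathbb{E}(|X|^k)\le\exp(9\lambda^2/4).$$ *)

From HB Require Import structures.
From mathcomp Require Import all_boot all_order all_algebra.
From mathcomp Require Import all_classical all_reals all_analysis.
Set Implicit Arguments. Unset Strict Implicit. Unset Printing Implicit Defensive.

From mathcomp Require Import all_boot all_order all_algebra.
From mathcomp Require Import all_classical all_reals all_analysis.
From mathcomp Require Import measurable_realfun.
From mathcomp Require Import zify ring lra.
Set Implicit Arguments.
Unset Strict Implicit.

Import Order.TTheory GRing.Theory Num.Theory numFieldNormedType.Exports.

(* Write t = |l| and m_k = E|X|^k.  The AM-GM inequality 2y <= 3/4 + 4/3 y^2,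
   applied to y = t|X| and weighted by y^(2q), bounds each odd term
   t^(2q+1) m_(2q+1) by its two even neighbours.  Grouping the series in pairs
   (2q, 2q+1) therefore bounds it by a series in the even terms t^(2q) m_(2q)
   alone, and by m_(2q) <= 2^(q+1) q! the q-th of these carries a coefficient
   at most (9t^2/4)^q / q!, so the partial sums stay below exp(9t^2/4) - 1.
   Finiteness of all moments comes from y^k <= 1 + y^(2k). *)

Lemma fact_sqr_expn_le r :
  15 * 2 ^ (r + 3) * (r + 2)`! ^ 2 * 4 ^ (r + 2) <= 16 * 9 ^ (r + 2) * (2 * r + 3)`!.
Proof.
elim: r => // r IH.
have -> : (r.+1 + 2)`! = (r + 3) * (r + 2)`! by rewrite addSn factS addn3 addn2.
have -> : (2 * r.+1 + 3)`! = (2 * r + 5) * (2 * r + 4) * (2 * r + 3)`!.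
  by rewrite (_ : 2 * r.+1 + 3 = (2 * r + 3).+2) ?factS ?mulnA; [congr (_ * _ * _); lia | lia].
rewrite !addSn !expnS.
move: IH; set A := 2 ^ _; set B := 4 ^ _; set C := 9 ^ _; set G := _`!; set F := _`! => IH.
apply: (@leq_trans (8 * (r + 3) ^ 2 * (15 * A * G ^ 2 * B))); first by apply: eq_leq; ring.
apply: (@leq_trans (18 * (2 * r + 5) * (r + 2) * (16 * C * F))); last by apply: eq_leq; ring.
by apply: leq_mul => //; nia.
Qed.

Local Open Scope ring_scope.

Lemma merged_coef_le (R : realFieldType) r :
  (2 / 3 / (2 * r + 3)`!%:R + (1 / (2 * r + 4)`!%:R + 3 / 8 / (2 * r + 5)`!%:R))
    * (2 ^+ (r + 3) * (r + 2)`!%:R) <= (9 / 4) ^+ (r + 2) / (r + 2)`!%:R :> R.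
Proof.
set F : R := (2 * r + 3)`!%:R; set G : R := (r + 2)`!%:R; set x : R := r%:R.
have F_gt0 : 0 < F by rewrite ltr0n fact_gt0.
have G_gt0 : 0 < G by rewrite ltr0n fact_gt0.
have x_ge0 : 0 <= x by rewrite ler0n.
have F4 : (2 * r + 4)`!%:R = (2 * x + 4) * F.
  rewrite (_ : 2 * r + 4 = (2 * r + 3).+1)%N; last lia.
  rewrite factS natrM -/F.
  by rewrite -natr1 natrD natrM; congr (_ * _); rewrite /x; ring.
have F5 : (2 * r + 5)`!%:R = (2 * x + 5) * ((2 * x + 4) * F).
  rewrite (_ : 2 * r + 5 = (2 * r + 4).+1)%N; last lia.
  rewrite factS natrM F4.
  by rewrite -natr1 natrD natrM; congr (_ * _); rewrite /x; ring.
have coef_le : 2 / 3 / F + (1 / ((2 * x + 4) * F) + 3 / 8 / ((2 * x + 5) * ((2 * x + 4) * F)))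
    <= 15 / 16 / F.
  rewrite [leLHS](_ : _ = (2 / 3 + 1 / (2 * x + 4) + 3 / 8 / ((2 * x + 5) * (2 * x + 4))) / F);
    last by field; rewrite gt_eqF //=; apply/andP; split; rewrite gt_eqF //; lra.
  rewrite ler_pM2r ?invr_gt0 //.
  have : 1 / (2 * x + 4) <= 1 / 4 by rewrite ler_pdivrMr; lra.
  have : 3 / 8 / ((2 * x + 5) * (2 * x + 4)) <= 3 / 160 by rewrite ler_pdivrMr; nra.
  lra.
have := fact_sqr_expn_le r; rewrite -(ler_nat R) !natrM !natrX -/G -/F => nat_le.
rewrite F4 F5; apply: le_trans (ler_wpM2r _ coef_le) _; first by rewrite mulr_ge0 ?exprn_ge0 ?ltW.
have -> : 15 / 16 / F * (2 ^+ (r + 3) * G)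
    = (15 * 2 ^+ (r + 3) * G ^+ 2 * 4 ^+ (r + 2)) / (16 * F * G * 4 ^+ (r + 2)).
  by field; rewrite !gt_eqF ?expf_neq0.
have -> : (9 / 4) ^+ (r + 2) / G = (16 * 9 ^+ (r + 2) * F) / (16 * F * G * 4 ^+ (r + 2)).
  by rewrite expr_div_n; field; rewrite !gt_eqF ?expf_neq0.
by rewrite ler_wpM2r // invr_ge0 !mulr_ge0 ?exprn_ge0 ?ltW.
Qed.

Lemma series_exp_coeff_le_expR (R : realType) (z : R) n :
  0 <= z -> series (exp_coeff z) n <= expR z.
Proof.
move=> z_ge0; apply: nondecreasing_cvgn_le; last exact: is_cvg_series_exp_coeff.
apply: (@nondecreasing_series _ _ xpredT 0) => k _ _.
exact: exp_coeff_ge0.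
Qed.

Section moment_series.
Variables (R : realType) (m : nat -> R).
Hypothesis m_ge0 : forall k, 0 <= m k.
Hypothesis m_even_le : forall q, (1 <= q)%N -> m (2 * q)%N <= 2 ^+ q.+1 * q`!%:R.
Hypothesis m_odd_le : forall q (s : R), 0 <= s ->
  2 * (s ^+ (2 * q + 1) * m (2 * q + 1)%N)
    <= 3 / 4 * (s ^+ (2 * q) * m (2 * q)%N) + 4 / 3 * (s ^+ (2 * q.+1) * m (2 * q.+1)%N).

Section fixed_parameter.
Variable t : R.
Hypothesis t_ge0 : 0 <= t.

Let w k := t ^+ k / k`!%:R * m k.
Let v q := t ^+ (2 * q) * m (2 * q)%N.
Let alpha q : R := 1 / (2 * q)`!%:R + 3 / 8 / (2 * q + 1)`!%:R.
Let beta q : R := 2 / 3 / (2 * q + 1)`!%:R.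
Let z := 9 * t ^+ 2 / 4.

Lemma pair_terms_le q : w (2 * q)%N + w (2 * q + 1)%N <= alpha q * v q + beta q * v q.+1.
Proof.
have odd_le : w (2 * q + 1)%N <= (3 / 8 * v q + 2 / 3 * v q.+1) / (2 * q + 1)`!%:R.
  rewrite /w mulrAC ler_wpM2r ?invr_ge0 //.
  by have := m_odd_le q t_ge0; rewrite /v; lra.
have -> : w (2 * q)%N = v q / (2 * q)`!%:R by rewrite /w /v mulrAC.
have -> : alpha q * v q + beta q * v q.+1
    = v q / (2 * q)`!%:R + (3 / 8 * v q + 2 / 3 * v q.+1) / (2 * q + 1)`!%:R.
  by rewrite /alpha /beta; ring.
by rewrite lerD2l.
Qed.

Lemma merged_term_le_exp_coeff r :
  (beta (r + 1)%N + alpha (r + 2)%N) * v (r + 2)%N <= exp_coeff z (r + 2)%N.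
Proof.
have -> : beta (r + 1)%N + alpha (r + 2)%N
    = 2 / 3 / (2 * r + 3)`!%:R + (1 / (2 * r + 4)`!%:R + 3 / 8 / (2 * r + 5)`!%:R).
  have e3 : (2 * (r + 1) + 1 = 2 * r + 3)%N by lia.
  have e4 : (2 * (r + 2) = 2 * r + 4)%N by lia.
  have e5 : (2 * (r + 2) + 1 = 2 * r + 5)%N by lia.
  by rewrite /beta /alpha e3 e5 e4.
have v_le : v (r + 2)%N <= (t ^+ 2) ^+ (r + 2) * (2 ^+ (r + 3) * (r + 2)`!%:R).
  rewrite /v -exprM ler_wpM2l ?exprn_ge0 // (_ : r + 3 = (r + 2).+1)%N; last lia.
  by apply: m_even_le; lia.
apply: le_trans (ler_wpM2l _ v_le) _; first by rewrite addr_ge0 ?divr_ge0.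
rewrite mulrCA; apply: le_trans (ler_wpM2l (exprn_ge0 _ (sqr_ge0 t)) (merged_coef_le _ r)) _.
by rewrite /exp_coeff /z /= [in leRHS]mulrAC [in leRHS]exprMn [in leRHS]mulrAC [in leRHS]mulrC.
Qed.

Lemma first_term_le_exp_coeff : alpha 1 * v 1 <= exp_coeff z 1.
Proof.
have -> : alpha 1 = 9 / 16 by rewrite /alpha (_ : (2 * 1)`! = 2)%N // (_ : (2 * 1 + 1)`! = 6)%N //; field.
have m2_le : m 2 <= 4.
  by have := m_even_le (ltn0Sn 0); rewrite (_ : 2 * 1 = 2)%N // factS fact0 expr2; lra.
have := ler_wpM2l (sqr_ge0 t) m2_le.
rewrite /v /exp_coeff /z /= expr1 divr1 (_ : 2 * 1 = 2)%N //.
lra.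
Qed.

Let w2 k := w k.+2.

Lemma series_pairs_le N :
  series w2 (2 * N.+1)%N <= series (exp_coeff z) N.+2 - 1 + beta N.+1 * v N.+2.
Proof.
elim: N => [|N IH].
  have coef0 : exp_coeff z 0 = 1 by rewrite /exp_coeff /= expr0 divr1.
  rewrite !seriesSr /series /= !big_geq // coef0 /w2.
  have := pair_terms_le 1; rewrite (_ : 2 * 1 = 2)%N // (_ : 2 + 1 = 3)%N //.
  have := first_term_le_exp_coeff.
  lra.
rewrite (_ : 2 * N.+2 = (2 * N.+1).+2)%N; last lia.
rewrite 2!seriesSr [series _ N.+3]seriesSr.
have := pair_terms_le N.+2; rewrite (_ : 2 * N.+2 + 1 = (2 * N.+1).+3)%N; last lia.
rewrite (_ : 2 * N.+2 = (2 * N.+1).+2)%N; last lia.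
have := merged_term_le_exp_coeff N; rewrite !addn1 !addn2.
rewrite /w2 in IH *; lra.
Qed.

Lemma series_shift2_le_expR n : series w2 n <= expR z - 1.
Proof.
have z_ge0 : 0 <= z by rewrite divr_ge0 ?mulr_ge0 ?sqr_ge0.
apply: le_trans (_ : series w2 n <= series w2 (2 * n.+1)%N) _.
  apply: (@nondecreasing_series _ w2 xpredT 0) => //; last lia.
  by move=> k _ _; rewrite mulr_ge0 ?divr_ge0 ?exprn_ge0.
apply: le_trans (series_pairs_le n) _.
have := merged_term_le_exp_coeff n; rewrite !addn1 !addn2.
have := series_exp_coeff_le_expR n.+3 z_ge0; rewrite seriesSr.
have : 0 <= alpha n.+2 * v n.+2.
  by apply: mulr_ge0; [rewrite addr_ge0 ?divr_ge0 | rewrite mulr_ge0 ?exprn_ge0].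
lra.
Qed.

End fixed_parameter.

Lemma moment_series_cvg_le (l : R) :
  let u := fun k => l ^+ k.+2 / k.+2`!%:R * m k.+2 in
  cvgn (series u) /\ 1 + limn (series u) <= expR (9 * l ^+ 2 / 4).
Proof.
move=> u.
have normed_le n : [normed series u] n <= expR (9 * l ^+ 2 / 4) - 1.
  rewrite -real_normK ?num_real //; apply: le_trans (series_shift2_le_expR (normr_ge0 l) n).
  apply: ler_sum => k _.
  by rewrite /u /= normrM normf_div normrX normr_nat (ger0_norm (m_ge0 _)).
have cvg_normed : cvgn [normed series u].
  apply: nondecreasing_is_cvgn.
    by apply: (@nondecreasing_series _ _ xpredT 0) => k _ _; exact: normr_ge0.
  by exists (expR (9 * l ^+ 2 / 4) - 1) => _ [n _ <-]; exact: normed_le.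
split; first exact: normed_cvg cvg_normed.
have := lim_series_norm cvg_normed.
have : limn [normed series u] <= expR (9 * l ^+ 2 / 4) - 1.
  by apply: limr_le => //; apply: nearW.
have := ler_norm (limn (series u)).
lra.
Qed.

End moment_series.

Section abs_moments.
Local Open Scope ereal_scope.
Context d (T : measurableType d) (R : realType) (P : probability T R) (X : {RV P >-> R}).

Let mu k := 'E_P[fun x => (`|X x| ^+ k)%R].

Let measurable_abs_pow k : measurable_fun setT (EFin \o (fun x => `|X x| ^+ k)%R).
Proof. by apply/measurable_EFinP; apply: measurable_funX; exact: measurableT_comp. Qed.

Lemma abs_moment_ge0 k : 0 <= mu k.
Proof. by rewrite /mu unlock; apply: integral_ge0 => x _; rewrite lee_fin exprn_ge0. Qed.

Lemma abs_moment0 : mu 0 = 1.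
Proof. by rewrite /mu (_ : (fun x => _) = cst 1%R) ?expectation_cst. Qed.

Lemma abs_moment_le_lin (a b c : R) i j k : (0 <= a)%R -> (0 <= b)%R -> (0 <= c)%R ->
  (forall s : R, 0 <= s -> a * s ^+ i <= b * s ^+ j + c * s ^+ k)%R ->
  a%:E * mu i <= b%:E * mu j + c%:E * mu k.
Proof.
move=> a_ge0 b_ge0 c_ge0 poly_le; rewrite /mu unlock.
have scaled_ge0 (r : R) n : (0 <= r)%R -> forall x, setT x -> 0 <= r%:E * (`|X x| ^+ n)%:E.
  by move=> r_ge0 x _; rewrite mule_ge0 // lee_fin exprn_ge0.
have scaled_measurable (r : R) n : measurable_fun setT (fun x => r%:E * (`|X x| ^+ n)%:E).
  by apply: emeasurable_funM => //; exact: measurable_abs_pow.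
have integralZ (r : R) n : (0 <= r)%R ->
    \int[P]_x (r%:E * (`|X x| ^+ n)%:E) = r%:E * \int[P]_x ((`|X x| ^+ n)%:E).
  by move=> r_ge0; apply: ge0_integralZl_EFin => //; exact: measurable_abs_pow.
rewrite -!integralZ // -ge0_integralD //; [|exact: scaled_ge0..].
apply: ge0_le_integral => //; [exact: scaled_ge0|exact: emeasurable_funD|].
by move=> x _; rewrite -!EFinM -EFinD lee_fin poly_le.
Qed.

Lemma abs_moment_fin : (forall p, (0 < p)%N -> mu (2 * p) < +oo) -> forall k, mu k < +oo.
Proof.
move=> even_fin [|n]; first by rewrite abs_moment0 ltry.
have : 1%:E * mu n.+1 <= 1%:E * mu 0 + 1%:E * mu (2 * n.+1).
  apply: abs_moment_le_lin => // s s_ge0.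
  rewrite mulnC exprM expr0 !mul1r.
  have : (0 <= s ^+ n.+1)%R by rewrite exprn_ge0.
  set y := (s ^+ n.+1)%R => y_ge0.
  nra.
rewrite !mul1e abs_moment0 => moment_le.
by apply: le_lt_trans moment_le _; rewrite lte_add_pinfty ?ltry ?even_fin.
Qed.

Lemma fine_abs_moment_odd_le : (forall k, mu k < +oo) -> forall q (t : R), (0 <= t)%R ->
  (2 * (t ^+ (2 * q + 1) * fine (mu (2 * q + 1)))
    <= 3 / 4 * (t ^+ (2 * q) * fine (mu (2 * q)))
       + 4 / 3 * (t ^+ (2 * q.+1) * fine (mu (2 * q.+1))))%R.
Proof.
move=> fin q t t_ge0.
have muE k : mu k = (fine (mu k))%:E by rewrite fineK // ge0_fin_numE ?abs_moment_ge0 ?fin.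
have : (2 * t ^+ (2 * q + 1))%:E * mu (2 * q + 1)
    <= (3 / 4 * t ^+ (2 * q))%:E * mu (2 * q) + (4 / 3 * t ^+ (2 * q.+1))%:E * mu (2 * q.+1).
  apply: abs_moment_le_lin; rewrite ?mulr_ge0 ?exprn_ge0 // => s s_ge0.
  rewrite -!mulrA -!exprMn (_ : 2 * q.+1 = 2 * q + 2)%N; last lia.
  have : (0 <= t * s)%R by rewrite mulr_ge0.
  set y := (t * s)%R => y_ge0.
  rewrite (exprD y (2 * q) 1) (exprD y (2 * q) 2) expr1.
  have : (0 <= y ^+ (2 * q))%R by rewrite exprn_ge0.
  set Y := (y ^+ (2 * q))%R => Y_ge0.
  have := mulr_ge0 Y_ge0 (sqr_ge0 (3 - 4 * y)%R).
  rewrite (_ : (Y * (3 - 4 * y) ^+ 2 = 9 * Y - 24 * (Y * y) + 16 * (Y * y ^+ 2))%R); last by ring.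
  lra.
rewrite [mu (2 * q + 1)]muE [mu (2 * q)]muE [mu (2 * q.+1)]muE -!EFinM -EFinD lee_fin.
lra.
Qed.

End abs_moments.

Local Open Scope ereal_scope.

Theorem lemma3 (d : measure_display) (T : measurableType d) (R : realType)
  (P : probability T R) (X : {RV P >-> R}) :
  (forall p : nat, (1 <= p)%N ->
     'E_P[fun x => (`|X x| ^+ (2 * p))%R] <= ((2 ^+ p.+1 * p`!%:R)%R)%:E) ->
  forall l : R,
    (forall k : nat, 'E_P[fun x => (`|X x| ^+ k)%R] < +oo) /\
    let u := fun k : nat =>
      (l ^+ k.+2 / k.+2`!%:R * fine 'E_P[fun x => (`|X x| ^+ k.+2)%R])%R in
    cvgn (series u) /\
    (1 + limn (series u) <= expR (9 * l ^+ 2 / 4))%R.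
Proof.
move=> even_le l.
have fin : forall k, 'E_P[fun x => (`|X x| ^+ k)%R] < +oo.
  by apply: abs_moment_fin => p p_gt0; apply: le_lt_trans (even_le p p_gt0) (ltry _).
split; first exact: fin.
apply: (@moment_series_cvg_le _ (fun k => fine 'E_P[fun x => (`|X x| ^+ k)%R])).
- by move=> k; rewrite fine_ge0 ?abs_moment_ge0.
- move=> q q_gt0; rewrite -lee_fin fineK ?even_le //.
  by rewrite ge0_fin_numE ?abs_moment_ge0 ?fin.
- exact: fine_abs_moment_odd_le.
Qed.
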